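(* Let $(X,E,\ell)$ be a strongly connected edge-labelled directed graph with label alphabet $\Sigma$, equipped with transition probabilities $p(e)\ge\alpha>0$ for all $e\in E$ (for a constant $\alpha$) satisfying $\sum_{e:\,e^-=x}p(e)\le1$ for every $x\in X$. Let $F\subset\Sigma^+$ be a finite, non-empty set which is relatively dense in $(X,E,\ell)$. Then there exist $k\in\mathbb N$ and $\varepsilon_0>0$ such that $$\sum_{y\in X}p_F^{(k)}(x,y)\le1-\varepsilon_0\quad\text{for all }x\in X.$$
   Context: $\Sigma$ is a finite alphabet, $\Sigma^+$ the set of non-empty finite words. $(X,E,\ell)$ is a directed graph whose edges $e=(x,a,y)$ have initial vertex $e^-=x$, terminal vertex $e^+=y$ and label $\ell(e)=a\in\Sigma$ (two edges with the same endpoints have distinct labels). A path $\pi=e_1\cdots e_n$ has $e_i^+=e_{i+1}^-$, length $n$ and label $\ell(\pi)=\ell(e_1)\cdots\ell(e_n)$. Strongly connected: for any $x,y$ there is a path from $x$ to $y$. $d^+(x,y)$ is the minimal length of a path from $x$ to $y$. $F$ is relatively dense if there is $D$ such that for each $x$ there are $y$ and $w\in F$ with $d^+(x,y)\le D$ and a path starting at $y$ with label $w$. For a path $\pi=e_1\cdots e_n$ let $\mathbb P(\pi)=\prod_i p(e_i)$. Then $p_F^{(n)}(x,y)=\sum\mathbb P(\pi)$, the sum over all paths $\pi$ of length $n$ from $x$ to $y$ whose label contains no element of $F$ as a factor (contiguous subword); this is the probability that the Markov chain (with possible killing) on $X$ moving along edges with probabilities $p(e)$ goes from $x$ to $y$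 in $n$ steps without traversing in consecutive steps a path with label in $F$. *)

From mathcomp Require Import all_boot all_order all_algebra.
From mathcomp Require Import reals.
Set Implicit Arguments. Unset Strict Implicit. Unset Printing Implicit Defensive.
Import Order.TTheory GRing.Theory Num.Theory.
Local Open Scope ring_scope.

(* An edge-labelled directed graph (X,E,l) with label alphabet Sigma is given by
   its (finite, duplicate-free) lists of outgoing edges: the edge (x,a,y) is in E
   iff (a,y) \in out x.  Distinct edges with the same endpoints thus have distinct
   labels.  A path from x is a sequence of steps (a_i, x_i) of edges
   (x_{i-1},a_i,x_i) with x_0 = x. *)

Section Graph.
Variables (Sigma : finType) (X : eqType) (out : X -> seq (Sigma * X)).

Definition is_edge (x : X) (a : Sigma) (y : X) : bool := (a, y) \in out x.

Fixpoint paths (x : X) (n : nat) : seq (seq (Sigma * X)) :=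
  match n with
  | 0 => [:: [::]]
  | n'.+1 => flatten [seq [seq e :: q | q <- paths e.2 n'] | e <- out x]
  end.

Definition path_end (x : X) (pi : seq (Sigma * X)) : X := last x (map snd pi).
Definition path_label (pi : seq (Sigma * X)) : seq Sigma := map fst pi.

Definition reach (x y : X) (n : nat) : Prop :=
  exists2 pi, pi \in paths x n & path_end x pi = y.

Definition strongly_connected : Prop := forall x y : X, exists n, reach x y n.

Definition dplus_le (x y : X) (D : nat) : Prop := exists2 n, (n <= D)%N & reach x y n.

Definition has_path_label (y : X) (w : seq Sigma) : Prop :=
  exists2 pi, pi \in paths y (size w) & path_label pi = w.

Definition relatively_dense (F : seq (seq Sigma)) : Prop :=
  exists D : nat, forall x : X, exists y : X, exists2 w : seq Sigma,
    w \in F & dplus_le x y D /\ has_path_label y w.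

Variable R : realType.
Variable p : X -> Sigma -> X -> R.

Fixpoint path_prob (x : X) (pi : seq (Sigma * X)) : R :=
  match pi with
  | [::] => 1
  | e :: q => p x e.1 e.2 * path_prob e.2 q
  end.

Definition avoids (F : seq (seq Sigma)) (pi : seq (Sigma * X)) : bool :=
  all (fun w => ~~ infix w (path_label pi)) F.

Definition pF (F : seq (seq Sigma)) (n : nat) (x y : X) : R :=
  \sum_(pi <- paths x n | avoids F pi && (path_end x pi == y)) path_prob x pi.

(* \sum_{y in X} p_F^{(n)}(x,y): the summand vanishes outside the finite set of
   endpoints of length-n paths from x, so the sum is over that set. *)
Definition pF_total (F : seq (seq Sigma)) (n : nat) (x : X) : R :=
  \sum_(y <- undup [seq path_end x pi | pi <- paths x n]) pF F n x y.

End Graph.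

From mathcomp Require Import all_boot all_order all_algebra.
From mathcomp Require Import reals.
Import Order.TTheory GRing.Theory Num.Theory.
Local Open Scope ring_scope.

(* Relative density puts, within distance D of any vertex x, a path from x of
   length m <= D + max |w| whose label contains some w in F; this path has
   probability at least beta^(D + max |w|) with beta = min(alpha, 1).  Since the
   chain is substochastic, the total mass of the length-m paths from x is at most
   1, so the mass of the F-avoiding ones is at most 1 minus that of this path,
   and extending paths beyond length m cannot increase the avoiding mass. *)

Lemma ler_sum_pred (T : eqType) (R : numDomainType) (r : seq T)
    (P Q : pred T) (f : T -> R) :
  (forall i, i \in r -> 0 <= f i) -> (forall i, i \in r -> P i -> Q i) ->
  \sum_(i <- r | P i) f i <= \sum_(i <- r | Q i) f i.
Proof.
move=> f_ge0 PQ; rewrite big_mkcond [leRHS]big_mkcond big_seq [leRHS]big_seq.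
apply: ler_sum => i ri; case Pi: (P i); first by rewrite (PQ i ri Pi).
by case: (Q i); rewrite ?f_ge0.
Qed.

Section PathMass.
Set Implicit Arguments.
Unset Strict Implicit.
Variables (Sigma : finType) (X : eqType) (out : X -> seq (Sigma * X)).
Variables (R : realType) (p : X -> Sigma -> X -> R).

Local Notation P := (path_prob p).

Lemma cat_mem_paths x n m pi1 pi2 : pi1 \in paths out x n ->
  pi2 \in paths out (path_end x pi1) m -> pi1 ++ pi2 \in paths out x (n + m).
Proof.
elim: n x pi1 => [|n IH] x pi1 /=; first by rewrite inE => /eqP ->.
case/flatten_mapP => e oute /mapP [q q_paths ->] /= pi2_paths.
by apply/flatten_mapP; exists e => //; apply/mapP; exists (q ++ pi2); rewrite ?IH.
Qed.

Lemma sum_paths_cons x n (Q : pred (seq (Sigma * X))) :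
  \sum_(pi <- paths out x n.+1 | Q pi) P x pi =
  \sum_(e <- out x) p x e.1 e.2 * \sum_(q <- paths out e.2 n | Q (e :: q)) P e.2 q.
Proof.
rewrite /= big_flatten /= big_map; apply: eq_bigr => e _.
by rewrite big_map mulr_sumr.
Qed.

Lemma pF_totalE F k x :
  pF_total out p F k x = \sum_(pi <- paths out x k | avoids F pi) P x pi.
Proof.
rewrite /pF_total /pF.
under eq_bigr => y _ do rewrite big_mkcondr /=.
rewrite exchange_big /= [RHS]big_seq_cond [LHS]big_seq_cond.
apply: eq_bigr => pi /andP [pi_paths _].
rewrite -big_mkcond -big_filter.
rewrite (@eq_filter _ _ (pred1 (path_end x pi))); last by move=> y; rewrite /= eq_sym.
by rewrite filter_pred1_uniq ?undup_uniq ?big_seq1 // mem_undup map_f.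
Qed.

Section LowerBound.
Variable beta : R.
Hypothesis beta_ge0 : 0 <= beta.
Hypothesis beta_le_p : forall x e, e \in out x -> beta <= p x e.1 e.2.

Lemma path_prob_ge_expn x n pi : pi \in paths out x n -> beta ^+ n <= P x pi.
Proof.
elim: n x pi => [|n IH] x pi /=; first by rewrite inE => /eqP ->; rewrite expr0.
case/flatten_mapP => e oute /mapP [q q_paths ->] /=.
by rewrite exprS ler_pM ?exprn_ge0 ?beta_le_p ?(IH _ _ q_paths).
Qed.

End LowerBound.

Section Substochastic.
Hypothesis p_ge0 : forall x e, e \in out x -> 0 <= p x e.1 e.2.
Hypothesis p_sum_le1 : forall x, \sum_(e <- out x) p x e.1 e.2 <= 1.

Lemma path_prob_ge0 x n pi : pi \in paths out x n -> 0 <= P x pi.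
Proof.
elim: n x pi => [|n IH] x pi /=; first by rewrite inE => /eqP ->.
case/flatten_mapP => e oute /mapP [q q_paths ->] /=.
by rewrite mulr_ge0 ?p_ge0 ?(IH _ _ q_paths).
Qed.

Lemma sum_path_prob_le1 x n : \sum_(pi <- paths out x n) P x pi <= 1.
Proof.
elim: n x => [|n IH] x; first by rewrite /= big_seq1.
rewrite (sum_paths_cons x n predT); apply: le_trans (p_sum_le1 x).
rewrite big_seq [leRHS]big_seq; apply: ler_sum => e oute.
by rewrite ler_piMr ?p_ge0.
Qed.

Lemma sum_path_prob_take_le m j x (Q : pred (seq (Sigma * X))) :
  \sum_(pi <- paths out x (m + j) | Q (take m pi)) P x pi <=
  \sum_(pi <- paths out x m | Q pi) P x pi.
Proof.
elim: m x Q => [|m IH] x Q.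
  rewrite add0n /= big_cons big_nil addr0; under eq_bigl => pi do rewrite take0.
  by case: (Q [::]); [exact: sum_path_prob_le1 | rewrite big_pred0].
rewrite addSn (sum_paths_cons _ _ (fun pi => Q (take m.+1 pi))) sum_paths_cons.
rewrite big_seq [leRHS]big_seq; apply: ler_sum => e oute.
by rewrite ler_wpM2l ?p_ge0 ?(IH e.2 (fun q => Q (e :: q))).
Qed.

Lemma sum_path_prob_pred_le x n (Q : pred (seq (Sigma * X))) pi0 :
  pi0 \in paths out x n -> ~~ Q pi0 ->
  \sum_(pi <- paths out x n | Q pi) P x pi <= 1 - P x pi0.
Proof.
move=> pi0_paths nQpi0; rewrite lerBrDr; apply: le_trans (sum_path_prob_le1 x n).
rewrite [leRHS](bigID Q) lerD2l /= (big_rem _ pi0_paths) nQpi0 lerDl.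
by rewrite big_seq_cond sumr_ge0 // => pi /andP [/mem_rem /path_prob_ge0].
Qed.

(* Once a path has read w, every extension of it has read w too. *)
Lemma sum_path_prob_avoid_le x m k w pi0 :
  (m <= k)%N -> pi0 \in paths out x m -> infix w (path_label pi0) ->
  \sum_(pi <- paths out x k | ~~ infix w (path_label pi)) P x pi <= 1 - P x pi0.
Proof.
move=> le_mk pi0_paths w_pi0; rewrite -(subnKC le_mk).
pose Q (pi : seq (Sigma * X)) := ~~ infix w (path_label pi).
apply: le_trans (le_trans (sum_path_prob_take_le m (k - m) x Q) _); last first.
  by apply: sum_path_prob_pred_le; rewrite /Q ?negbK.
apply: ler_sum_pred => [pi /path_prob_ge0 //|pi _]; apply: contra => w_take.
by apply: infix_trans w_take _; rewrite /path_label map_take infix_take.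
Qed.

End Substochastic.
End PathMass.

Theorem mainTheorem15 (Sigma : finType) (X : eqType)
  (out : X -> seq (Sigma * X)) (R : realType) (p : X -> Sigma -> X -> R)
  (alpha : R) (F : seq (seq Sigma)) :
  (forall x, uniq (out x)) ->
  strongly_connected out ->
  0 < alpha ->
  (forall x a y, is_edge out x a y -> alpha <= p x a y) ->
  (forall x, \sum_(e <- out x) p x e.1 e.2 <= 1) ->
  F != [::] ->
  (forall w, w \in F -> w != [::]) ->
  relatively_dense out F ->
  exists k : nat, exists2 eps0 : R, 0 < eps0 &
    forall x : X, pF_total out p F k x <= 1 - eps0.
Proof.
move=> _ _ alpha_gt0 alpha_le_p p_sum_le1 _ _ [D dense].
set beta := Num.min alpha 1.
have beta_gt0 : 0 < beta by rewrite lt_min alpha_gt0 ltr01.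
have beta_le_p x e : e \in out x -> beta <= p x e.1 e.2.
  by case: e => a y oute; rewrite ge_min alpha_le_p.
have p_ge0 x e : e \in out x -> 0 <= p x e.1 e.2.
  by move=> oute; rewrite (le_trans (ltW beta_gt0)) ?beta_le_p.
set k := (D + \max_(w <- F) size w)%N.
exists k, (beta ^+ k); first exact: exprn_gt0.
move=> x; have [y [w wF [[n le_nD [pi1 pi1_paths <-]] [pi2 pi2_paths pi2_w]]]] := dense x.
have pi_paths := cat_mem_paths pi1_paths pi2_paths.
have le_mk : (n + size w <= k)%N.
  by rewrite leq_add // (leq_bigmax_seq _ wF).
have w_pi : infix w (path_label (pi1 ++ pi2)).
  by rewrite /path_label map_cat -/(path_label pi2) pi2_w suffix_infix.
have avoid_le := sum_path_prob_avoid_le p_ge0 p_sum_le1 le_mk pi_paths w_pi.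
rewrite pF_totalE; apply: le_trans (le_trans _ avoid_le) _.
- apply: ler_sum_pred => [pi /(path_prob_ge0 p_ge0) //|pi _ /allP]; exact.
- rewrite lerD2l lerN2 (le_trans _ (path_prob_ge_expn (ltW beta_gt0) beta_le_p pi_paths)) //.
  by apply: ler_wiXn2l le_mk; [exact: ltW | rewrite ge_min lexx orbT].
Qed.
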